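(* Every Kan fibration of simplicial sets is a Skvortsov–Shehtman fibration; in particular, every Kan complex is a Skvortsov–Shehtman complex.
   Context: For $n>1$ and $0\le p<q\le n$, the $(p,q)$-th rhombus $R_{p,q}[n]\subseteq\Delta[n]$ is the union of the $p$-th and $q$-th faces of the standard simplex $\Delta[n]$. A simplicial map $f:E\to B$ is a Skvortsov–Shehtman fibration if for all $n>1$, $0\le p<q\le n$, every commutative square with top map $R_{p,q}[n]\to E$, left map the inclusion $R_{p,q}[n]\hookrightarrow\Delta[n]$, right map $f$ and bottom map $\Delta[n]\to B$ admits a diagonal filler $\Delta[n]\to E$ making both triangles commute. A simplicial set $S$ is a Skvortsov–Shehtman complex if $S\to *$ is a Skvortsov–Shehtman fibration. Kan fibrations are maps with the right lifting property against all horn inclusions $\Lambda_p[n]\hookrightarrow\Delta[n]$, $n>0$, $0\le p\le n$. *)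

From mathcomp Require Import all_boot.
Unset Printing Implicit Defensive.

(* Morphisms [m] -> [n] of the simplex category: monotone maps
   {0..m} -> {0..n}. *)
Definition monob m n (f : {ffun 'I_m.+1 -> 'I_n.+1}) : bool :=
  [forall i : 'I_m.+1, forall j : 'I_m.+1, (i <= j) ==> (f i <= f j)].

Arguments monob {m n} f.

Definition Hom m n := {f : {ffun 'I_m.+1 -> 'I_n.+1} | monob f}.

Lemma monob_id n : monob [ffun i : 'I_n.+1 => i].
Proof. by apply/forallP=> i; apply/forallP=> j; rewrite !ffunE; apply/implyP. Qed.

Definition idH n : Hom n n := exist (@monob n n) _ (monob_id n).

Lemma monob_comp {k m n} (f : Hom m n) (g : Hom k m) :
  monob [ffun x => sval f (sval g x)].
Proof.
case: f g => [f Hf] [g Hg] /=.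
apply/forallP=> i; apply/forallP=> j; rewrite !ffunE; apply/implyP=> ij.
have gij : g i <= g j by move/forallP: Hg => /(_ i) /forallP /(_ j) /implyP; apply.
by move/forallP: Hf => /(_ (g i)) /forallP /(_ (g j)) /implyP; apply.
Qed.

Definition compH {k m n} (f : Hom m n) (g : Hom k m) : Hom k n :=
  exist (@monob k n) _ (monob_comp f g).

Record sSet := SSet {
  ob :> nat -> Type;
  act : forall m n, Hom m n -> ob n -> ob m;
  act_id : forall n (x : ob n), act n n (idH n) x = x;
  act_comp : forall k m n (f : Hom m n) (g : Hom k m) (x : ob n),
      act k n (compH f g) x = act k m g (act m n f x)
}.
Arguments act {s m n} f x.

Record sSetMap (X Y : sSet) := SSetMap {
  mapf :> forall n : nat, X n -> Y n;
  map_nat : forall m n (f : Hom m n) (x : X n),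
      mapf m (act f x) = act f (mapf n x)
}.
Arguments mapf {X Y} s n x.
Arguments map_nat {X Y} s m n f x.

Lemma Delta_id {n m} (s : Hom m n) : compH s (idH m) = s.
Proof. by case: s => s Hs; apply/val_inj/ffunP=> i /=; rewrite !ffunE. Qed.

Lemma Delta_comp {n k m l} (f : Hom m l) (g : Hom k m) (s : Hom l n) :
  compH s (compH f g) = compH (compH s f) g.
Proof. by apply/val_inj/ffunP=> i /=; rewrite !ffunE. Qed.

Definition Delta (n : nat) : sSet :=
  @SSet (fun m => Hom m n) (fun m l f s => compH s f)
        (fun m s => Delta_id s) (fun k m l f g s => Delta_comp f g s).

Definition pt : sSet :=
  @SSet (fun _ => unit) (fun _ _ _ x => x) (fun _ _ => erefl) (fun _ _ _ _ _ _ => erefl).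

Definition to_pt (X : sSet) : sSetMap X pt :=
  @SSetMap X pt (fun _ _ => tt) (fun _ _ _ _ => erefl).

(* A simplicial subset A of Delta[n] is given by a predicate on simplices
   (closed under the action).  A map A -> X is a family of simplices indexed
   by the simplices of A, compatible with the action. *)
Definition subpred n := forall m, pred (Hom m n).

Definition sub_map {n} (A : subpred n) (X : sSet) :=
  { u : forall m (s : Hom m n), A m s -> X m |
    forall k m (g : Hom k m) (s : Hom m n) (h : A m s) (h' : A k (compH s g)),
      u k (compH s g) h' = act g (u m s h) }.

Definition rlp {n} (A : subpred n) {E B : sSet} (f : sSetMap E B) : Prop :=
  forall (u : sub_map A E) (b : sSetMap (Delta n) B),
    (forall m (s : Hom m n) (h : A m s), f m (sval u m s h) = b m s) ->
    exists l : sSetMap (Delta n) E,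
      (forall m (s : Hom m n) (h : A m s), l m s = sval u m s h) /\
      (forall m (s : Hom m n), f m (l m s) = b m s).

(* [s] misses the vertex i, i.e. s lies in the i-th face of Delta[n]. *)
Definition misses {m n} (s : Hom m n) (i : nat) : bool :=
  [forall j : 'I_m.+1, nat_of_ord (sval s j) != i].

Definition horn n (p : nat) : subpred n :=
  fun m s => [exists i : 'I_n.+1, (nat_of_ord i != p) && misses s i].

Definition rhombus n (p q : nat) : subpred n :=
  fun m s => misses s p || misses s q.

Definition KanFibration {E B : sSet} (f : sSetMap E B) : Prop :=
  forall n p, 0 < n -> p <= n -> rlp (horn n p) f.

Definition SSFibration {E B : sSet} (f : sSetMap E B) : Prop :=
  forall n p q, 1 < n -> p < q -> q <= n -> rlp (rhombus n p q) f.

Definition KanComplex (S : sSet) : Prop := KanFibration (to_pt S).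
Definition SSComplex (S : sSet) : Prop := SSFibration (to_pt S).

From Pilot Require Import Defs.
From mathcomp Require Import all_boot zify.
(* Otherwise ssrbool's [subpred] shadows [Defs.subpred]. *)
Import Defs.

(* Call the union [faces n S] of the faces d_i, i in S, of Delta[n]
   admissible when S contains some but not all of the vertices 0..n.
   Admissible unions lift against Kan fibrations, by induction on n and on
   the number of faces other than a fixed missing d_k that are missing.
   If d_k is the only one, the union is the horn Lambda_k[n]. Otherwise,
   for another missing face d_j, first extend the map over d_j by filling,
   in d_j = Delta[n-1], the union of its faces lying in [faces n S]: this
   union is admissible in dimension n-1. For n > 1 the rhombus R_{p,q}[n]
   is an admissible union of two faces. *)

Set Implicit Arguments.
Unset Strict Implicit.
Unset Printing Implicit Defensive.

Lemma compH_idl m n (s : Hom m n) : compH (idH n) s = s.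
Proof. by case: s => s Hs; apply/val_inj/ffunP=> i /=; rewrite !ffunE. Qed.

Lemma compHA k l m n (f : Hom m n) (g : Hom l m) (h : Hom k l) :
  compH f (compH g h) = compH (compH f g) h.
Proof. by apply/val_inj/ffunP=> i /=; rewrite !ffunE. Qed.

Definition yoneda (X : sSet) n (x : X n) : sSetMap (Delta n) X :=
  @SSetMap (Delta n) X (fun m s => act s x)
    (fun m l g s => act_comp X m l n s g x).

Section SubMaps.

Variables (X : sSet) (n : nat).
Implicit Types A : subpred n.

Lemma sub_map_eq A (u : sub_map A X) m (s s' : Hom m n) h h' :
  s = s' -> sval u m s h = sval u m s' h'.
Proof. by move=> Es; subst s'; rewrite (bool_irrelevance h h'). Qed.

Lemma sub_map_act A (u : sub_map A X) k m (g : Hom k m) (s : Hom m n) s' h h' :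
  s' = compH s g -> sval u k s' h' = act g (sval u m s h).
Proof. by move=> Es; subst s'; apply: (proj2_sig u). Qed.

Definition restrict_sub_map A A' (AA' : forall m s, A m s -> A' m s)
    (u : sub_map A' X) : sub_map A X.
Proof.
exists (fun m s h => sval u m s (AA' m s h)) => k m g s h h'.
exact: (proj2_sig u).
Defined.

Definition pull_sub_map n' A (A' : subpred n') (g : Hom n' n)
    (gA : forall m t, A' m t -> A m (compH g t)) (u : sub_map A X) :
    sub_map A' X.
Proof.
exists (fun m t h => sval u m (compH g t) (gA m t h)) => k m h t ht ht'.
by apply: sub_map_act; rewrite compHA.
Defined.

Definition glue A (u : sub_map A X) (v : forall m, Hom m n -> X m) m
    (s : Hom m n) : X m :=
  match A m s =P true with ReflectT h => sval u m s h | ReflectF _ => v m s end.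

Lemma glue_in A (u : sub_map A X) v m s (h : A m s) : glue u v s = sval u m s h.
Proof.
by rewrite /glue; case: (A m s =P true) => [h'|] //; apply: sub_map_eq.
Qed.

Lemma glue_notin A (u : sub_map A X) v m s : ~~ A m s -> glue u v s = v m s.
Proof. by rewrite /glue; case: (A m s =P true) => // h /negP. Qed.

End SubMaps.

Section Fillers.

Variables (E B : sSet) (f : sSetMap E B).

Definition fill n (A : subpred n) : Prop :=
  forall (u : sub_map A E) (beta : B n),
    (forall m s h, f m (sval u m s h) = act s beta) ->
    exists e : E n, f n e = beta /\ forall m s h, act s e = sval u m s h.

Lemma rlp_fillP n (A : subpred n) : rlp A f <-> fill A.
Proof.
split=> [lift_f u beta fu_beta | fill_A u b fu_b].
  have [l [l_u fl]] := lift_f u (yoneda beta) fu_beta.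
  exists (l n (idH n)); split=> [|m s h]; first by rewrite fl /= act_id.
  by rewrite -l_u -map_nat /= compH_idl.
have fu_b' : forall m s h, f m (sval u m s h) = act s (b n (idH n)).
  by move=> m s h; rewrite fu_b -map_nat /= compH_idl.
have [e [fe e_u]] := fill_A u _ fu_b'.
exists (yoneda e); split=> // m s.
by rewrite /= map_nat fe -map_nat /= compH_idl.
Qed.

Lemma eq_fill n (A A' : subpred n) :
  (forall m s, A m s = A' m s) -> fill A -> fill A'.
Proof.
move=> eqA fill_A u beta fu_beta.
have AA' m s : A m s -> A' m s by rewrite eqA.
have [e [fe e_u]] :=
  fill_A (restrict_sub_map AA' u) beta (fun m s h => fu_beta m s _).
exists e; split=> // m s h.
have hA : A m s by rewrite eqA.
by rewrite (e_u m s hA) /=; apply: sub_map_eq.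
Qed.

End Fillers.

Definition faces n (S : pred nat) : subpred n :=
  fun m s => [exists i : 'I_n.+1, S i && misses s i].
Arguments faces : clear implicits.

Lemma misses_comp k m n (s : Hom m n) (g : Hom k m) i :
  misses s i -> misses (compH s g) i.
Proof. by move/forallP=> s_i; apply/forallP=> a /=; rewrite ffunE. Qed.

Lemma faces_comp n S k m (s : Hom m n) (g : Hom k m) :
  faces n S m s -> faces n S k (compH s g).
Proof.
case/existsP=> i /andP [Si s_i]; apply/existsP; exists i.
by rewrite Si misses_comp.
Qed.

Lemma monob_coface n (j : 'I_n.+2) : monob [ffun i : 'I_n.+1 => lift j i].
Proof.
apply/forallP=> a; apply/forallP=> b.
by rewrite !ffunE /= leq_bump2; apply/implyP.
Qed.

Definition coface n (j : 'I_n.+2) : Hom n n.+1 :=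
  exist monob _ (monob_coface j).

Lemma unbump_leq j a b : a <= b -> unbump j a <= unbump j b.
Proof. rewrite /unbump; case: (ltnP j a); case: (ltnP j b) => /=; lia. Qed.

(* A retraction of [coface j]: the codegeneracy identifying [j] with [j.+1],
   or [n.+1] with [n] when [j = n.+1] (the only case where [minn] matters). *)
Lemma monob_retr n (j : 'I_n.+2) :
  monob [ffun i : 'I_n.+2 => (inord (minn (unbump j i) n) : 'I_n.+1)].
Proof.
apply/forallP=> a; apply/forallP=> b; rewrite !ffunE; apply/implyP=> ab.
rewrite !inordK ?ltnS ?geq_minr //.
have := unbump_leq j ab; lia.
Qed.

Definition retr n (j : 'I_n.+2) : Hom n.+1 n := exist monob _ (monob_retr j).

Lemma coface_retr m n (j : 'I_n.+2) (s : Hom m n.+1) :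
  misses s j -> compH (coface j) (compH (retr j) s) = s.
Proof.
move/forallP=> s_j; apply/val_inj/ffunP=> a; apply/val_inj.
have := s_j a; have := ltn_ord (sval s a); have := ltn_ord j.
rewrite /= !ffunE /= inordK ?ltnS ?geq_minr // /bump /unbump.
case: (ltnP j (sval s a)) => /=; lia.
Qed.

Lemma misses_coface m n (j : 'I_n.+2) (t : Hom m n) i :
  misses (compH (coface j) t) (bump j i) = misses t i.
Proof.
by apply: eq_forallb => a; rewrite /= !ffunE /= (inj_eq (can_inj (bumpK j))).
Qed.

Lemma faces_coface m n (S : pred nat) (j : 'I_n.+2) (t : Hom m n) :
  faces n (S \o bump j) m t -> faces n.+1 S m (compH (coface j) t).
Proof.
case/existsP=> i /andP [Si t_i]; apply/existsP; exists (lift j i).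
by rewrite [S _]Si misses_coface.
Qed.

Lemma faces_retr m n (S : pred nat) (j : 'I_n.+2) (s : Hom m n.+1) :
  ~~ S j -> misses s j -> faces n.+1 S m s ->
  faces n (S \o bump j) m (compH (retr j) s).
Proof.
move=> Sj s_j /existsP [i /andP [Si s_i]].
have /unlift_some [i' Ei _] : j != i by apply: contraNneq Sj => ->.
rewrite {}Ei in Si s_i; apply/existsP; exists i'.
by apply/andP; split; last rewrite -(misses_coface j) coface_retr.
Qed.

Lemma misses_faces_predU1 m n (S : pred nat) (j : nat) (s : Hom m n) :
  faces n (predU1 j S) m s -> ~~ faces n S m s -> misses s j.
Proof.
case/existsP=> i /andP [/orP [/eqP <- //| Si] s_i] /existsP []; exists i.
by rewrite Si.
Qed.

Section FaceExtension.

Variables (E B : sSet) (f : sSetMap E B) (n : nat) (S : pred nat) (j : 'I_n.+2).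
Hypothesis Sj : ~~ S j.

Definition face_sub_map (u : sub_map (faces n.+1 S) E) :
    sub_map (faces n (S \o bump j)) E :=
  pull_sub_map (fun m t => @faces_coface m n S j t) u.

Section Extension.

Variables (u : sub_map (faces n.+1 S) E) (x : E n).
Hypothesis x_u : forall m t h, act t x = sval (face_sub_map u) m t h.

Definition extend_face m (s : Hom m n.+1) : E m :=
  glue u (fun m s => act (compH (retr j) s) x) s.

Lemma extend_face_misses m (s : Hom m n.+1) :
  misses s j -> extend_face s = act (compH (retr j) s) x.
Proof.
move=> s_j; case: (boolP (faces n.+1 S m s)) => [s_S|]; last exact: glue_notin.
rewrite /extend_face (glue_in _ _ s_S) (x_u (faces_retr Sj s_j s_S)) /=.
by apply: sub_map_eq; rewrite coface_retr.
Qed.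

Lemma extend_face_act k m (g : Hom k m) (s : Hom m n.+1) :
  faces n.+1 (predU1 (j : nat) S) m s ->
  extend_face (compH s g) = act g (extend_face s).
Proof.
move=> s_Sj; case: (boolP (faces n.+1 S m s)) => [s_S|s_S].
  rewrite /extend_face (glue_in _ _ s_S) (glue_in _ _ (faces_comp g s_S)).
  exact: sub_map_act.
have s_j := misses_faces_predU1 s_Sj s_S.
by rewrite !extend_face_misses ?misses_comp // -act_comp compHA.
Qed.

Definition extend_sub_map : sub_map (faces n.+1 (predU1 (j : nat) S)) E.
Proof.
exists (fun m s _ => extend_face s) => k m g s h _.
exact: extend_face_act.
Defined.

End Extension.

Lemma fill_extend_face :
  fill f (faces n (S \o bump j)) -> fill f (faces n.+1 (predU1 (j : nat) S)) ->
  fill f (faces n.+1 S).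
Proof.
move=> fill_face fill_Sj u beta fu_beta.
have [x [fx x_u]] : exists x, f n x = act (coface j) beta /\
    forall m t h, act t x = sval (face_sub_map u) m t h.
  by apply: fill_face => m t h; rewrite /= fu_beta act_comp.
have fext m s (h : faces n.+1 (predU1 (j : nat) S) m s) :
    f m (sval (extend_sub_map x_u) m s h) = act s beta.
  rewrite /=; case: (boolP (faces n.+1 S m s)) => [s_S|s_S].
    by rewrite /extend_face glue_in fu_beta.
  have s_j := misses_faces_predU1 h s_S.
  by rewrite extend_face_misses // map_nat fx -act_comp coface_retr.
have [e [fe e_ext]] := fill_Sj _ _ fext.
exists e; split=> // m s h.
have h' : faces n.+1 (predU1 (j : nat) S) m s.
  case/existsP: h => i /andP [Si s_i]; apply/existsP; exists i.
  by rewrite /= Si orbT.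
by rewrite (e_ext m s h') /= /extend_face glue_in.
Qed.

End FaceExtension.

Section KanLifts.

Variables (E B : sSet) (f : sSetMap E B).
Hypothesis kan_f : KanFibration f.

Lemma fill_faces_horn n (S : pred nat) (k : 'I_n.+2) :
  ~~ S k -> (forall i : 'I_n.+2, i != k -> S i) -> fill f (faces n.+1 S).
Proof.
move=> Sk S_k; apply: (@eq_fill _ _ _ _ (horn n.+1 k)); last first.
  exact/rlp_fillP/(kan_f (ltn0Sn n) (ltn_ord k)).
move=> m s; apply: eq_existsb => i; congr (_ && _).
by apply/idP/idP=> [/S_k // | Si]; apply: contraNneq Sk => /val_inj <-.
Qed.

Lemma fill_faces n (S : pred nat) :
  (exists i : 'I_n.+1, S i) -> (exists k : 'I_n.+1, ~~ S k) ->
  fill f (faces n S).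
Proof.
elim: n S => [|n IHn] S [i Si] [k Sk].
  by move: Sk; rewrite (ord1 k) -(ord1 i) Si.
move count_S: #|[pred j : 'I_n.+2 | (j != k) && ~~ S j]| => c.
elim: c S Si Sk count_S => [|c IHc] S Si Sk count_S.
  apply: fill_faces_horn Sk _ => j jk; apply: contraT => Sj.
  by move/card0_eq: count_S => /(_ j); rewrite !inE jk Sj.
have := ltn0Sn c; rewrite -count_S => /card_gt0P [j /andP [jk Sj]].
have /unlift_some [i' Ei _] : j != i by apply: contraNneq Sj => ->.
have /unlift_some [k' Ek _] := jk.
apply: (fill_extend_face Sj).
  by apply: IHn; [exists i'; rewrite Ei in Si | exists k'; rewrite Ek in Sk].
apply: IHc; rewrite /= ?Si ?orbT // ?negb_or ?Sk ?andbT 1?eq_sym //.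
move: count_S; rewrite (cardD1 j) inE jk Sj => -[<-].
by apply: eq_card => x; rewrite !inE negb_or andbCA.
Qed.

End KanLifts.

Lemma faces_pred2 n p q : p <= n -> q <= n ->
  forall m s, faces n (pred2 p q) m s = rhombus n p q m s.
Proof.
move=> pn qn m s; apply/existsP/orP => [[i /andP [/orP [] /eqP <- s_i]]|];
  [by left | by right |].
by case=> s_pq; [exists (inord p) | exists (inord q)];
  rewrite /= inordK ?ltnS // eqxx ?orbT.
Qed.

Lemma kan_ss_fibration (E B : sSet) (f : sSetMap E B) :
  KanFibration f -> SSFibration f.
Proof.
move=> kan_f n p q n_gt1 pq qn.
have pn : p <= n by apply: ltnW (leq_trans pq qn).
have [k kn kpq] : exists2 k, k <= n & ~~ pred2 p q k.
  exists (if 0 < p then 0 else if q == 1 then 2 else 1); rewrite /=;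
    do 2?case: ifP; lia.
apply/rlp_fillP/(eq_fill (faces_pred2 pn qn))/(fill_faces kan_f).
  by exists (inord p); rewrite /= inordK ?ltnS // eqxx.
by exists (inord k); rewrite inordK ?ltnS.
Qed.

Theorem mainTheorem3 :
  (forall (E B : sSet) (f : sSetMap E B), KanFibration f -> SSFibration f) /\
  (forall S : sSet, KanComplex S -> SSComplex S).
Proof. by split=> [E B f | S]; apply: kan_ss_fibration. Qed.
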